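(* Let $(P+Q,\omega)$ be a labeled disjoint sum of posets and fix $s\in P$ such that $\omega(s) > \omega(t)$ for all $t\in Q$. Let $|P+Q|=n$ and $|P|=p$. Then \[ e_q^{\mathrm{maj}}(P+Q,\omega;s) = \binom{n-1}{p-1}_{q}\, e_q^{\mathrm{maj}}(P,\omega_1;s)\, e_q^{\mathrm{maj}}(Q,\omega_2), \] where $\omega_1,\omega_2$ are the restrictions of $\omega$ to $P$ and $Q$.
   Context: A labeled poset $(P,\omega)$ of size $n$ is a finite poset $P$ with a bijective labeling $\omega:P\to[n]$. For a linear extension $f:P\to[n]$ (an order-preserving bijection), the permutation $\omega\circ f^{-1}\in\mathfrak{S}_n$ is called a linear extension of the labeled poset; $\mathcal{L}(P,\omega)$ denotes the set of these. For $\sigma\in\mathfrak{S}_n$, $\mathrm{Des}(\sigma)=\{i\in[n-1]:\sigma_i>\sigma_{i+1}\}$ and $\mathrm{maj}(\sigma)=\sum_{i\in\mathrm{Des}(\sigma)} i$. Define $e_q^{\mathrm{maj}}(P,\omega)=\sum_{\sigma\in\mathcal{L}(P,\omega)}q^{\mathrm{maj}(\sigma)}$, and for fixed $s\in P$, $e_q^{\mathrm{maj}}(P,\omega;s)=\sum q^{\mathrm{maj}(\sigma)}$ summed over those $\sigma\in\mathcal{L}(P,\omega)$ that end with $\omega(s)$. Labels on $P$ and $Q$ are compared via the (order-preserving) relabelings induced by restricting $\omega$. The $q$-binomial coefficient is $\binom{m}{k}_q=\frac{[m]_q!}{[k]_q!\,[m-k]_q!}$ with $[m]_q=1+q+\cdots+q^{m-1}$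 and $[m]_q!=[m]_q\cdots[1]_q$. *)

From mathcomp Require Import all_boot all_order all_algebra.
Set Implicit Arguments. Unset Strict Implicit. Unset Printing Implicit Defensive.
Import GRing.Theory.
Local Open Scope ring_scope.

Definition is_poset (T : finType) (le : rel T) : Prop :=
  [/\ reflexive le, antisymmetric le & transitive le].

Definition sum_rel (P Q : finType) (leP : rel P) (leQ : rel Q) : rel (P + Q)%type :=
  fun x y => match x, y with
             | inl a, inl b => leP a b
             | inr a, inr b => leQ a b
             | _, _ => false
             end.

(* A linear extension of a poset (T, le), listed as the sequence
   f^{-1}(1), ..., f^{-1}(n) of elements of T. *)
Definition is_linext (T : finType) (le : rel T) (s : seq T) : bool :=
  [forall x, forall y, ((x != y) && le x y) ==> (index x s < index y s)%N].

Definition linexts (T : finType) (le : rel T) : seq (seq T) :=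
  [seq s <- permutations (enum T) | is_linext le s].

Definition maj (T : Type) (w : T -> nat) (s : seq T) : nat :=
  let ws := map w s in
  (\sum_(0 <= i < (size ws).-1 | nth 0 ws i.+1 < nth 0 ws i) i.+1)%N.

Definition emaj (T : finType) (le : rel T) (w : T -> nat) : {poly rat} :=
  \sum_(s <- linexts le) 'X^(maj w s).

Definition emaj_end (T : finType) (le : rel T) (w : T -> nat) (t : T) : {poly rat} :=
  \sum_(s <- linexts le | last t s == t) 'X^(maj w s).

(* order-preserving relabeling (standardization) of an injective labeling
   onto 1..|T| *)
Definition std (T : finType) (w : T -> nat) : T -> nat :=
  fun x => #|[set y | (w y < w x)%N]|.+1.

Definition qint (m : nat) : {poly rat} := \sum_(i < m) 'X^i.
Definition qfact (m : nat) : {poly rat} := \prod_(1 <= i < m.+1) qint i.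
Definition qbinom (m k : nat) : {poly rat} :=
  qfact m %/ (qfact k * qfact (m - k)).

(* A linear extension of P + Q is a shuffle of a linear extension σ of P with
   one τ of Q, and it ends with s exactly when σ does.  Read from right to
   left, such an extension is s followed by a shuffle of the reversals of
   σ' and τ, where σ = σ' s.  Writing rmaj for the major index of the reversed
   word, the shuffles r of words u and v with distinct letters satisfy
     sum_r q^rmaj(z r) = [|u|+|v| choose |u|]_q q^(rmaj(z u) + rmaj(z v)),
   by induction on u and v using one of the two q-Pascal rules according to
   the relative order of z and the first letters of u and v.  As ω(s) exceeds
   every label of Q, prepending it to the reversal of τ creates no descent, and
   summing over σ and τ factors the generating function. *)

From mathcomp Require Import all_boot all_order all_algebra ring zify.
Set Implicit Arguments. Unset Strict Implicit. Unset Printing Implicit Defensive.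
Import GRing.Theory Num.Theory.
Local Open Scope ring_scope.

Fixpoint qbin (m k : nat) : {poly rat} :=
  match m, k with
  | _, 0%N => 1
  | 0%N, _.+1 => 0
  | m'.+1, k'.+1 => qbin m' k' + 'X^(k'.+1) * qbin m' k'.+1
  end.

Lemma qbin0 m : qbin m 0 = 1. Proof. by case: m. Qed.

Lemma qbinS m k : qbin m.+1 k.+1 = qbin m k + 'X^(k.+1) * qbin m k.+1.
Proof. by []. Qed.

Lemma qbin_small m k : (m < k)%N -> qbin m k = 0.
Proof. by elim: m k => [|m IH] [|k] //= lt_mk; rewrite !IH ?mulr0 ?addr0 // ltnW. Qed.

Lemma qbinn m : qbin m m = 1.
Proof. by elim: m => //= m ->; rewrite qbin_small // mulr0 addr0. Qed.

Lemma qintD a b : qint (a + b) = qint a + 'X^a * qint b.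
Proof.
rewrite /qint big_split_ord big_distrr; congr (_ + _).
by apply: eq_bigr => i _; rewrite exprD.
Qed.

Lemma qfact0 : qfact 0 = 1. Proof. by rewrite /qfact big_geq. Qed.

Lemma qfactS m : qfact m.+1 = qfact m * qint m.+1.
Proof. by rewrite /qfact big_nat_recr. Qed.

Lemma qint_neq0 m : qint m.+1 != 0.
Proof.
have qint_at1 : (qint m.+1).[1] = m.+1%:R.
  rewrite /qint horner_sum.
  by under eq_bigr do rewrite hornerXn expr1n; rewrite sumr_const card_ord.
apply/eqP => qint0; move/eqP: qint_at1.
by rewrite qint0 horner0 eq_sym pnatr_eq0.
Qed.

Lemma qfact_neq0 m : qfact m != 0.
Proof.
by elim: m => [|m IH]; rewrite ?qfact0 ?oner_neq0 // qfactS mulf_neq0 ?qint_neq0.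
Qed.

Lemma qbin_fact m k : (k <= m)%N -> qbin m k * (qfact k * qfact (m - k)) = qfact m.
Proof.
elim: m k => [|m IH] [|k] //= le_km; rewrite ?qfact0 ?subn0 ?mul1r //.
rewrite subSS; move: le_km; rewrite ltnS leq_eqVlt => /predU1P[-> | lt_km].
  by rewrite qbinn (qbin_small (ltnSn m)) mulr0 addr0 subnn qfact0 mulr1 mul1r.
have [q mk_q] : exists q, (m - k = q.+1)%N by exists (m - k.+1)%N; rewrite subnSK.
have mk1_q : (m - k.+1 = q)%N by rewrite subnS mk_q.
have m1_kq : (m.+1 = k.+1 + q.+1)%N by rewrite -mk_q addSn subnKC // ltnW.
transitivity (qbin m k * (qfact k * qfact (m - k)) * qint k.+1
              + 'X^(k.+1) * (qbin m k.+1 * (qfact k.+1 * qfact (m - k.+1))) * qint q.+1).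
  by rewrite mk_q mk1_q !qfactS; ring.
by rewrite !IH // 1?ltnW // qfactS m1_kq qintD; ring.
Qed.

Lemma qbinomE m k : (k <= m)%N -> qbinom m k = qbin m k.
Proof.
by move=> le_km; rewrite /qbinom -(qbin_fact le_km) mulpK // mulf_neq0 ?qfact_neq0.
Qed.

Lemma qbin_sub m k : (k <= m)%N -> qbin m (m - k) = qbin m k.
Proof.
move=> le_km; apply: (@mulIf _ (qfact k * qfact (m - k))).
  by rewrite mulf_neq0 ?qfact_neq0.
rewrite /= (qbin_fact le_km) -[in RHS](qbin_fact (leq_subr k m)) subKn //.
by rewrite [qfact k * _]mulrC.
Qed.

Lemma qbinS_dual m k : (k <= m)%N -> qbin m.+1 k.+1 = 'X^(m - k) * qbin m k + qbin m k.+1.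
Proof.
rewrite leq_eqVlt => /predU1P[-> | lt_km].
  by rewrite !qbinn (qbin_small (ltnSn m)) subnn expr0 mulr1 addr0.
have mk : (m - k = (m - k.+1).+1)%N by rewrite subnSK.
rewrite -(qbin_sub (ltnW lt_km : k.+1 <= m.+1)%N) subSS mk qbinS -mk addrC.
by rewrite !qbin_sub // ltnW.
Qed.

(* The major index of [rev r] ([maj_rev]): read backwards, the statistic is
   compatible with shuffles built by [cons]. *)
Fixpoint rmaj (r : seq nat) : nat :=
  if r is x :: t then (rmaj t + size t * (x < head 0 t))%N else 0%N.

Section Shuffle.
Variable T : Type.

Fixpoint shuffle (u v : seq T) {struct u} : seq (seq T) :=
  match u with
  | [::] => [:: v]
  | x :: u' =>
    let fix shuffle_u (v : seq T) : seq (seq T) :=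
      match v with
      | [::] => [:: u]
      | y :: v' => map (cons x) (shuffle u' v) ++ map (cons y) (shuffle_u v')
      end in
    shuffle_u v
  end.

Lemma shuffle0s v : shuffle [::] v = [:: v]. Proof. by []. Qed.

Lemma shuffles0 u : shuffle u [::] = [:: u]. Proof. by case: u. Qed.

Lemma shuffle_cons x u y v : shuffle (x :: u) (y :: v) =
  map (cons x) (shuffle u (y :: v)) ++ map (cons y) (shuffle (x :: u) v).
Proof. by []. Qed.

End Shuffle.

Lemma map_shuffle (T U : Type) (f : T -> U) u v :
  shuffle (map f u) (map f v) = map (map f) (shuffle u v).
Proof.
elim: u v => [|x u IHu] v //; elim: v => [|y v IHv]; first by rewrite !shuffles0.
by rewrite !map_cons !shuffle_cons map_cat -!map_cons IHu IHv -!map_comp.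
Qed.

Lemma size_shuffle (T : eqType) (u v r : seq T) :
  r \in shuffle u v -> size r = (size u + size v)%N.
Proof.
elim: u v r => [|x u IHu] v r; first by rewrite shuffle0s inE => /eqP->.
elim: v r => [|y v IHv] r; first by rewrite shuffles0 inE addn0 => /eqP->.
rewrite shuffle_cons mem_cat => /orP[] /mapP[r' r'_in ->] /=.
  by rewrite (IHu _ _ r'_in).
by rewrite (IHv _ r'_in) addnS.
Qed.

(* The inductive step of [sum_shuffle_rmaj], once q^(rmaj (x u) + rmaj (y v))
   is factored out. *)
Lemma qbin_shuffle_step a b x y z : x != y -> z != x -> z != y ->
  'X^((a + b).+2 * (z < x)) * qbin (a + b).+1 a * 'X^(b.+1 * (x < y)) +
  'X^((a + b).+2 * (z < y)) * qbin (a + b).+1 a.+1 * 'X^(a.+1 * (y < x))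
  = qbin (a + b).+2 a.+1 * 'X^(a.+1 * (z < x) + b.+1 * (z < y)).
Proof.
move=> neq_xy neq_zx neq_zy.
have pascal : qbin (a + b).+2 a.+1 = qbin (a + b).+1 a + 'X^(a.+1) * qbin (a + b).+1 a.+1.
  exact: qbinS.
have pascal_dual : qbin (a + b).+2 a.+1 = 'X^(b.+1) * qbin (a + b).+1 a + qbin (a + b).+1 a.+1.
  by rewrite qbinS_dual ?subSn ?addKn // ?leq_addr // ltnW // ltnS leq_addr.
have X_ab : 'X^((a + b).+2) = 'X^(a.+1) * 'X^(b.+1) :> {poly rat}.
  by rewrite -exprD addSn addnS.
have X_bool n (c : bool) : 'X^(n * c) = if c then 'X^n else 1 :> {poly rat}.
  by case: c; rewrite ?muln1 ?muln0.
rewrite exprD !X_bool.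
case: (ltngtP x y) neq_xy => // xy _; case: (ltngtP z x) neq_zx => // zx _;
  case: (ltngtP z y) neq_zy => // zy _; try lia.
all: rewrite ?X_ab; first [rewrite pascal_dual; ring | rewrite pascal; ring].
Qed.

Lemma rmaj_cons2 z x r : rmaj [:: z, x & r] = (rmaj (x :: r) + (size r).+1 * (z < x))%N.
Proof. by []. Qed.

Lemma sum_shuffle_rmaj_cons2 z x u v :
  \sum_(r <- shuffle u v) 'X^(rmaj [:: z, x & r]) =
  'X^((size u + size v).+1 * (z < x)) * \sum_(r <- shuffle u v) 'X^(rmaj (x :: r))
  :> {poly rat}.
Proof.
rewrite big_distrr !big_seq; apply: eq_bigr => r r_in.
by rewrite rmaj_cons2 (size_shuffle r_in) exprD mulrC.
Qed.

Theorem sum_shuffle_rmaj z u v : uniq (z :: u ++ v) ->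
  \sum_(r <- shuffle u v) 'X^(rmaj (z :: r)) =
  qbin (size u + size v) (size u) * 'X^(rmaj (z :: u) + rmaj (z :: v)).
Proof.
elim: u z v => [|x u IHu] z v.
  by rewrite shuffle0s big_seq1 qbin0 mul1r.
elim: v z => [|y v IHv] z.
  by rewrite shuffles0 big_seq1 addn0 qbinn mul1r addn0.
move=> uniq_z; have uniq_x : uniq (x :: u ++ y :: v) by case/andP: uniq_z.
have uniq_y : uniq (y :: (x :: u) ++ v).
  have perm_yx : perm_eq ((x :: u) ++ [:: y] ++ v) (y :: (x :: u) ++ v).
    by rewrite perm_catCA.
  by rewrite -(perm_uniq perm_yx).
have neq_xy : x != y.
  by apply: contraTneq uniq_x => ->; rewrite cons_uniq mem_cat mem_head orbT.
have neq_zx : z != x by apply: contraTneq uniq_z => ->; rewrite cons_uniq mem_head.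
have neq_zy : z != y.
  by apply: contraTneq uniq_z => ->; rewrite cons_uniq mem_cat mem_head orbT.
rewrite shuffle_cons big_cat !big_map !sum_shuffle_rmaj_cons2.
rewrite (IHu _ _ uniq_x) (IHv _ uniq_y).
rewrite !rmaj_cons2 ![size (_ :: _)]/= !addnS !addSn.
set a := size u; set b := size v.
transitivity ('X^(rmaj (x :: u) + rmaj (y :: v)) *
  ('X^((a + b).+2 * (z < x)) * qbin (a + b).+1 a * 'X^(b.+1 * (x < y)) +
   'X^((a + b).+2 * (z < y)) * qbin (a + b).+1 a.+1 * 'X^(a.+1 * (y < x)))).
  by rewrite /= !exprD; ring.
by rewrite qbin_shuffle_step // !exprD; ring.
Qed.

Section MajorIndex.
Variables (T : Type) (w : T -> nat).

Lemma maj_rcons s z : maj w (rcons s z) = (maj w s + size s * (w z < w (last z s)))%N.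
Proof.
rewrite /maj map_rcons size_rcons !size_map succnK.
case: s => [|x s]; first by rewrite !big_geq.
rewrite [size (x :: s)]/= succnK big_mkcond big_nat_recr // [in RHS]big_mkcond.
congr (_ + _)%N.
  apply: eq_big_nat => i /andP[_ lt_is]; have lt_i1 : (i.+1 < size (x :: s))%N := lt_is.
  by rewrite !nth_rcons size_map lt_i1 (ltnW lt_i1).
have nth_size : nth 0%N (map w (x :: s)) (size s) = w (last x s).
  by rewrite (nth_map x) // -[size s]/((size (x :: s)).-1) nth_last.
rewrite !nth_rcons size_map [size (x :: s)]/= ltnn eqxx ltnSn nth_size.
by case: (w z < w (last x s))%N; rewrite ?muln1 ?muln0.
Qed.

Lemma maj_rev s : maj w s = rmaj (map w (rev s)).
Proof.
elim/last_ind: s => [|s z IHs]; first by rewrite /maj big_geq.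
rewrite maj_rcons rev_rcons /= size_map size_rev IHs; congr (_ + _ * _)%N.
by case/lastP: s {IHs} => [|s y]; rewrite ?ltnn ?rev_rcons ?last_rcons.
Qed.

End MajorIndex.

Lemma eq_maj (T : Type) (w1 w2 : T -> nat) :
  (forall x y, (w1 x < w1 y) = (w2 x < w2 y))%N -> maj w1 =1 maj w2.
Proof.
move=> eq_lt; elim/last_ind => [|s z IHs]; first by rewrite /maj !big_geq.
by rewrite !maj_rcons IHs eq_lt.
Qed.

Lemma ltn_std (T : finType) (w : T -> nat) x y : (std w x < std w y)%N = (w x < w y)%N.
Proof.
rewrite /std ltnS; have [lt_xy | le_yx] := ltnP (w x) (w y).
  apply: proper_card; apply/properP; split; last by exists x; rewrite !inE ?ltnn.
  by apply/subsetP => t; rewrite !inE => /ltn_trans; apply.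
apply/negbTE; rewrite -leqNgt; apply: subset_leq_card.
by apply/subsetP => t; rewrite !inE => /leq_trans; apply.
Qed.

Lemma maj_std (T : finType) (w : T -> nat) : maj (std w) =1 maj w.
Proof. exact/eq_maj/ltn_std. Qed.

Lemma emaj_std (T : finType) (le : rel T) (w : T -> nat) : emaj le (std w) = emaj le w.
Proof. by apply: eq_bigr => σ _; rewrite maj_std. Qed.

Lemma emaj_end_std (T : finType) (le : rel T) (w : T -> nat) t :
  emaj_end le (std w) t = emaj_end le w t.
Proof. by apply: eq_bigr => σ _; rewrite maj_std. Qed.

Lemma mem_map_cons (T : eqType) (x y : T) s (L : seq (seq T)) :
  (x :: s \in map (cons y) L) = (x == y) && (s \in L).
Proof.
apply/mapP/andP => [[s' s'_in [-> ->]] | [/eqP-> s_in]]; last by exists s.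
by rewrite eqxx.
Qed.

Section SumWords.
Variables P Q : eqType.
Implicit Types (S : seq (P + Q)) (σ : seq P) (τ : seq Q).

Fixpoint lefts S : seq P :=
  if S is x :: S' then (if x is inl a then a :: lefts S' else lefts S') else [::].
Fixpoint rights S : seq Q :=
  if S is x :: S' then (if x is inr b then b :: rights S' else rights S') else [::].

Lemma count_lefts a S : count_mem a (lefts S) = count_mem (inl a) S.
Proof. by elim: S => [|[c|c] S IH] //=; rewrite IH. Qed.
Lemma count_rights b S : count_mem b (rights S) = count_mem (inr b) S.
Proof. by elim: S => [|[c|c] S IH] //=; rewrite IH. Qed.

Lemma index_lefts a a' S :
  (index (inl a) S < index (inl a') S)%N = (index a (lefts S) < index a' (lefts S))%N.
Proof.
elim: S => [|[c|c] S IH] //=; rewrite ?(inj_eq inl_inj) //.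
by case: (c == a); case: (c == a'); rewrite ?ltnS.
Qed.
Lemma index_rights b b' S :
  (index (inr b) S < index (inr b') S)%N = (index b (rights S) < index b' (rights S))%N.
Proof.
elim: S => [|[c|c] S IH] //=; rewrite ?(inj_eq inr_inj) //.
by case: (c == b); case: (c == b'); rewrite ?ltnS.
Qed.

Lemma lefts_rcons S x :
  lefts (rcons S x) = if x is inl a then rcons (lefts S) a else lefts S.
Proof. by case: x => c; elim: S => [|[d|d] S IH] //=; rewrite IH. Qed.
Lemma rights_rcons S x :
  rights (rcons S x) = if x is inr b then rcons (rights S) b else rights S.
Proof. by case: x => c; elim: S => [|[d|d] S IH] //=; rewrite IH. Qed.

Lemma last_lefts a S : last (inl a) S = inl a -> last a (lefts S) = a.
Proof.
by case/lastP: S => [|S x] //=; rewrite last_rcons => ->; rewrite lefts_rcons last_rcons.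
Qed.

Lemma lefts_rev S : lefts (rev S) = rev (lefts S).
Proof.
elim: S => [|x S IH] //; rewrite rev_cons lefts_rcons IH.
by case: x => c //=; rewrite rev_cons.
Qed.
Lemma rights_rev S : rights (rev S) = rev (rights S).
Proof.
elim: S => [|x S IH] //; rewrite rev_cons rights_rcons IH.
by case: x => c //=; rewrite rev_cons.
Qed.

Lemma eq_map_inl S σ : (S == map inl σ) = (lefts S == σ) && (rights S == [::]).
Proof.
elim: S σ => [|[c|c] S IH] [|a σ] //=; rewrite ?andbF //.
by rewrite !eqseq_cons (inj_eq inl_inj) IH andbA.
Qed.
Lemma eq_map_inr S τ : (S == map inr τ) = (lefts S == [::]) && (rights S == τ).
Proof.
elim: S τ => [|[c|c] S IH] [|b τ] //=; rewrite ?andbF //.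
by rewrite !eqseq_cons (inj_eq inr_inj) IH andbCA.
Qed.

Lemma mem_shuffle_sum σ τ S :
  (S \in shuffle (map inl σ) (map inr τ)) = (lefts S == σ) && (rights S == τ).
Proof.
elim: σ τ S => [|a σ IHσ] τ S; first by rewrite shuffle0s inE eq_map_inr.
elim: τ S => [|b τ IHτ] S; first by rewrite shuffles0 inE eq_map_inl.
rewrite !map_cons shuffle_cons mem_cat -!map_cons.
case: S => [|[c|c] S]; first by apply/orP => -[] /mapP[].
- by rewrite !mem_map_cons IHσ (inj_eq inl_inj) /= orbF eqseq_cons andbA.
- by rewrite !mem_map_cons IHτ (inj_eq inr_inj) /= eqseq_cons andbCA.
Qed.

Lemma uniq_shuffle_sum σ τ : uniq (shuffle (map inl σ) (map inr τ)).
Proof.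
elim: σ τ => [|a σ IHσ] τ //; elim: τ => [|b τ IHτ]; first by rewrite shuffles0.
rewrite !map_cons shuffle_cons cat_uniq -!map_cons !map_inj_uniq ?IHσ ?IHτ ?andbT;
  try by move=> ? ? [].
by apply/hasPn => _ /mapP[S _ ->]; rewrite mem_map_cons.
Qed.

End SumWords.

Lemma perm_enumE (T : finType) (s : seq T) :
  perm_eq s (enum T) = [forall x, count_mem x s == 1%N].
Proof.
apply/idP/forallP => [perm_s x | count1].
  by rewrite (permP perm_s) count_uniq_mem ?enum_uniq ?mem_enum.
have mem_s x : x \in s by rewrite -has_pred1 has_count (eqP (count1 x)).
apply: uniq_perm => [||x]; rewrite ?enum_uniq ?mem_s ?mem_enum //.
by apply: count_mem_uniq => x; rewrite mem_s (eqP (count1 x)).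
Qed.

Lemma forall_sum (P Q : finType) (p : pred (P + Q)%type) :
  [forall x, p x] = [forall a, p (inl a)] && [forall b, p (inr b)].
Proof.
apply/forallP/andP => [p_all | [/forallP p_inl /forallP p_inr] [] //].
by split; apply/forallP.
Qed.

Lemma mem_linexts (T : finType) (le : rel T) s :
  (s \in linexts le) = perm_eq s (enum T) && is_linext le s.
Proof. by rewrite mem_filter mem_permutations andbC. Qed.

Lemma uniq_linexts (T : finType) (le : rel T) : uniq (linexts le).
Proof. by rewrite filter_uniq // permutations_uniq. Qed.

Lemma linext_uniq (T : finType) (le : rel T) s : s \in linexts le -> uniq s.
Proof. by rewrite mem_linexts => /andP[/perm_uniq-> _]; apply: enum_uniq. Qed.

Lemma size_linexts (T : finType) (le : rel T) s : s \in linexts le -> size s = #|T|.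
Proof. by rewrite mem_linexts cardE => /andP[/perm_size]. Qed.

Section SumPoset.
Variables (P Q : finType) (leP : rel P) (leQ : rel Q).
Implicit Types (S : seq (P + Q)%type).

Lemma perm_enum_sum S : perm_eq S (enum {: P + Q}) =
  perm_eq (lefts S) (enum P) && perm_eq (rights S) (enum Q).
Proof.
rewrite !perm_enumE forall_sum.
by congr (_ && _); apply: eq_forallb => x; rewrite ?count_lefts ?count_rights.
Qed.

Lemma is_linext_sum S : is_linext (sum_rel leP leQ) S =
  is_linext leP (lefts S) && is_linext leQ (rights S).
Proof.
rewrite /is_linext forall_sum; congr (_ && _); apply: eq_forallb => x;
  rewrite forall_sum.
- rewrite [X in _ && X](_ : _ = true) ?andbT; last by apply/forallP.
  by apply: eq_forallb => y; rewrite index_lefts (inj_eq inl_inj).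
- rewrite [X in X && _](_ : _ = true) //; last by apply/forallP.
  by apply: eq_forallb => y; rewrite index_rights (inj_eq inr_inj).
Qed.

Lemma linexts_sum S : (S \in linexts (sum_rel leP leQ)) =
  (lefts S \in linexts leP) && (rights S \in linexts leQ).
Proof. by rewrite !mem_linexts perm_enum_sum is_linext_sum andbACA. Qed.

End SumPoset.

Lemma partition_big_seq (R : nmodType) (I J : eqType) (r : seq I) (rJ : seq J)
    (p : pred I) (g : I -> J) (F : I -> R) :
  uniq rJ -> {in r, forall i, p i -> g i \in rJ} ->
  \sum_(i <- r | p i) F i = \sum_(j <- rJ) \sum_(i <- r | p i && (g i == j)) F i.
Proof.
move=> uniq_rJ g_in; under [RHS]eq_bigr do rewrite big_mkcond.
rewrite exchange_big big_mkcond !big_seq; apply: eq_bigr => i i_r /=.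
case: ifP => [p_i | _]; last by rewrite big1.
rewrite -big_mkcond -big_filter /=.
have -> : [seq j <- rJ | g i == j] = [:: g i].
  rewrite -(filter_pred1_uniq uniq_rJ (g_in i i_r p_i)).
  by apply: eq_filter => j /=; rewrite eq_sym.
by rewrite big_seq1.
Qed.

Section SumLinexts.
Variables (P Q : finType) (leP : rel P) (leQ : rel Q) (s : P).

Lemma perm_linexts_sum_end σ τ :
    rcons σ s \in linexts leP -> τ \in linexts leQ ->
  perm_eq [seq S <- linexts (sum_rel leP leQ) |
             [&& last (inl s) S == inl s, lefts S == rcons σ s & rights S == τ]]
          [seq rev (inl s :: r) | r <- shuffle (map inl (rev σ)) (map inr (rev τ))].
Proof.
move=> σ_ext τ_ext; apply: uniq_perm.
- by rewrite filter_uniq ?uniq_linexts.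
- by rewrite map_inj_uniq ?uniq_shuffle_sum // => r1 r2 /(can_inj revK) [].
move=> S; rewrite mem_filter (map_comp rev (cons (inl s))).
rewrite -[S in RHS]revK (mem_map (can_inj revK)).
case/lastP: S => [|S x].
  by rewrite /= eq_sym -size_eq0 size_rcons andbF; apply/esym/mapP => -[].
rewrite rev_rcons mem_map_cons mem_shuffle_sum lefts_rev rights_rev !(inj_eq (can_inj revK)).
rewrite last_rcons linexts_sum lefts_rcons rights_rcons.
case: eqP => [-> | _] //=; rewrite eqseq_rcons eqxx andbT.
by case: eqP => [-> | _]; case: eqP => [-> | _]; rewrite ?σ_ext ?τ_ext ?andbF.
Qed.

Variable lab : (P + Q)%type -> nat.
Hypotheses (lab_inj : injective lab) (lab_top : forall t, (lab (inr t) < lab (inl s))%N).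

Lemma sum_linexts_sum_end σ τ :
    rcons σ s \in linexts leP -> τ \in linexts leQ ->
  \sum_(S <- linexts (sum_rel leP leQ) |
         [&& last (inl s) S == inl s, lefts S == rcons σ s & rights S == τ]) 'X^(maj lab S)
  = qbin (size σ + size τ) (size σ)
    * 'X^(maj (lab \o inl) (rcons σ s)) * 'X^(maj (lab \o inr) τ).
Proof.
move=> σ_ext τ_ext.
rewrite -big_filter (perm_big _ (perm_linexts_sum_end σ_ext τ_ext)) big_map.
under eq_bigr do rewrite maj_rev revK map_cons.
rewrite -(big_map (map lab) xpredT (fun r => 'X^(rmaj (lab (inl s) :: r)))) -map_shuffle.
rewrite sum_shuffle_rmaj; last first.
  rewrite -map_cat -map_cons (map_inj_uniq lab_inj) -cat_cons -map_cons cat_uniq.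
  rewrite !(map_inj_uniq inl_inj, map_inj_uniq inr_inj) -rev_rcons !rev_uniq.
  rewrite (linext_uniq σ_ext) (linext_uniq τ_ext) andbT /=.
  by apply/hasPn => _ /mapP[t _ ->]; apply/mapP => -[].
have top_τ :
    rmaj (lab (inl s) :: map lab (map inr (rev τ))) = rmaj (map (lab \o inr) (rev τ)).
  rewrite -map_comp; case: (rev τ) => [|t r] //.
  by rewrite map_cons rmaj_cons2 ltnNge (ltnW (lab_top t)) muln0 addn0.
by rewrite top_τ !size_map !size_rev -mulrA -exprD !maj_rev rev_rcons /= -map_comp.
Qed.

Lemma sum_linexts_sum_fiber σ τ : σ \in linexts leP -> τ \in linexts leQ ->
  \sum_(S <- linexts (sum_rel leP leQ) |
         (last (inl s) S == inl s) && ((lefts S, rights S) == (σ, τ))) 'X^(maj lab S)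
  = (if last s σ == s then qbin (#|P|.-1 + #|Q|) #|P|.-1 * 'X^(maj (lab \o inl) σ) else 0)
    * 'X^(maj (lab \o inr) τ).
Proof.
move=> σ_ext τ_ext; case: eqP => [σ_end | σ_not_end]; last first.
  rewrite mul0r big1 // => S /andP[/eqP/last_lefts S_end /eqP[lefts_S _]].
  by rewrite -lefts_S in σ_not_end.
under eq_bigl do rewrite xpair_eqE.
have P_gt0 : (0 < #|P|)%N by apply/card_gt0P; exists s.
rewrite -(size_linexts σ_ext) -(size_linexts τ_ext).
move: σ_ext σ_end P_gt0; case/lastP: σ => [σ_ext _ | σ x].
  by rewrite -(size_linexts σ_ext).
rewrite last_rcons size_rcons => σ_ext x_s _; subst x.
exact: sum_linexts_sum_end.
Qed.

Theorem emaj_end_sum_rel : emaj_end (sum_rel leP leQ) lab (inl s) =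
  qbin (#|P|.-1 + #|Q|) #|P|.-1 * emaj_end leP (lab \o inl) s * emaj leQ (lab \o inr).
Proof.
rewrite /emaj_end /emaj (partition_big_seq (g := fun S => (lefts S, rights S))
  (rJ := [seq (σ, τ) | σ <- linexts leP, τ <- linexts leQ])); first last.
- by move=> S; rewrite linexts_sum => /andP[σ_ext τ_ext] _; apply: allpairs_f.
- by rewrite allpairs_uniq ?uniq_linexts // => -[? ?] [? ?] _ _ [-> ->].
rewrite big_allpairs [in RHS]big_mkcond -mulrA big_distrlr big_distrr /= !big_seq.
apply: eq_bigr => σ σ_ext; rewrite big_distrr !big_seq; apply: eq_bigr => τ τ_ext.
by rewrite sum_linexts_sum_fiber //= mulrA; case: ifP; rewrite ?mulr0.
Qed.

End SumLinexts.

Theorem corollary3p5 (P Q : finType) (leP : rel P) (leQ : rel Q)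
  (n : nat) (omega : (P + Q)%type -> 'I_n) (s : P) :
  is_poset leP -> is_poset leQ -> bijective omega ->
  (forall t : Q, (val (omega (inr t)) < val (omega (inl s)))%N) ->
  emaj_end (sum_rel leP leQ) (fun x => val (omega x)) (inl s) =
    qbinom n.-1 (#|P|.-1)
    * emaj_end leP (std (fun x : P => val (omega (inl x)))) s
    * emaj leQ (std (fun x : Q => val (omega (inr x)))).
Proof.
move=> _ _ omega_bij omega_top.
have omega_inj : injective (fun x => val (omega x)).
  by move=> x y /val_inj/(bij_inj omega_bij).
have card_n : n = (#|P| + #|Q|)%N.
  by rewrite -card_sum (bij_eq_card omega_bij) card_ord.
have P_gt0 : (0 < #|P|)%N by apply/card_gt0P; exists s.
have -> : n.-1 = (#|P|.-1 + #|Q|)%N by rewrite card_n; lia.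
rewrite emaj_std emaj_end_std qbinomE ?leq_addr //.
exact: emaj_end_sum_rel.
Qed.
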